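(* Let $\bm y=\bm X\bm\beta+\bm z$, where $\bm X\in\mathbb{R}^{n\times p}$ is deterministic of full column rank with unit-norm columns $\bm x_1,\dots,\bm x_p$, $\bm\beta\in\mathbb{R}^p$, and $\bm z\sim N_n(\bm 0,\sigma^2\bm I_n)$. Let $\bm\Sigma=\bm X^\top\bm X$ and, for a fixed $\lambda>0$, $\bm\Sigma_\lambda=\bm\Sigma+\lambda\bm I_p$. Let $\bm s\in\mathbb{R}^p$ have nonnegative entries with $\bm\Sigma-\operatorname{diag}(\bm s)$ positive semidefinite, and let $\widetilde{\bm X}=[\widetilde{\bm x}_1,\dots,\widetilde{\bm x}_p]\in\mathbb{R}^{n\times p}$ be a fixed matrix with $\widetilde{\bm X}^\top\bm X=\bm\Sigma-\operatorname{diag}(\bm s)$ and $\widetilde{\bm x}_j^\top\widetilde{\bm x}_j=1$ for all $j$. Define $\widehat{\bm\beta}_\lambda=\bm\Sigma_\lambda^{-1}\bm X^\top\bm y$ and $\widetilde\beta_{\lambda j}=\widehat\beta_{\lambda j}+[\bm\Sigma_\lambda^{-1}]_{jj}(\widetilde{\bm x}_j^\top\bm y-\bm x_j^\top\bm y)$. If $\beta_j=0$, then $(\widehat\beta_{\lambda j},\widetilde\beta_{\lambda j})\stackrel{d}{=}(\widetilde\beta_{\lambda j},\widehat\beta_{\lambda j})$.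
   Context: $[\bm A]_{jj}$ denotes the $j$-th diagonal entry of a matrix $\bm A$; $\stackrel{d}{=}$ denotes equality in distribution. *)

From HB Require Import structures.
From mathcomp Require Import all_boot all_order all_algebra.
From mathcomp Require Import all_classical all_reals all_analysis.
Set Implicit Arguments. Unset Strict Implicit. Unset Printing Implicit Defensive.
Import Order.TTheory GRing.Theory Num.Theory.
Local Open Scope classical_set_scope.
Local Open Scope ring_scope.

(* z = (z_1,...,z_n) ~ N_n(0, sigma^2 I_n): the coordinates are measurable,
   each has law N(0, sigma^2) (normal_prob 0 sigma: mean 0, std. dev. sigma),
   and they are mutually independent (product rule for every family of
   measurable sets; taking A i = setT recovers every subfamily). *)
Definition iid_gaussian_vector {d} {T : measurableType d} {R : realType}
  (P : probability T R) (n : nat) (sigma : R) (z : 'I_n -> T -> R) : Prop :=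
  [/\ (forall i, measurable_fun setT (z i)),
      (forall i (A : set R), measurable A ->
          P (z i @^-1` A) = normal_prob 0 sigma A) &
      (forall A : 'I_n -> set R, (forall i, measurable (A i)) ->
          P [set t | forall i, A i (z i t)] =
          (\prod_(i < n) P (z i @^-1` A i))%E)].

Definition eq_in_law2 {d} {T : measurableType d} {R : realType}
  (P : probability T R) (U V : T -> R * R) : Prop :=
  forall A : set (R * R), measurable A -> P (U @^-1` A) = P (V @^-1` A).

Definition psd {R : realType} {p : nat} (M : 'M[R]_p) : Prop :=
  forall v : 'cV[R]_p, 0 <= (v^T *m M *m v) 0 0.

From HB Require Import structures.
From mathcomp Require Import all_boot all_order all_algebra.
From mathcomp Require Import all_classical all_reals all_analysis.
From mathcomp Require Import measurable_realfun ring.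
Import Order.TTheory GRing.Theory Num.Theory.
Local Open Scope classical_set_scope.
Local Open Scope ring_scope.
Set Implicit Arguments. Unset Strict Implicit. Unset Printing Implicit Defensive.

(* Both estimates are affine in the noise, [m + sum_i u_i z_i] and
   [m + sum_i v_i z_i], with the same constant m because beta_j = 0, and the
   knockoff constraints force |u| = |v|.  The law of a pair of linear forms
   (sum_i a_i z_i, sum_i b_i z_i) in i.i.d. N(0, sigma^2) variables depends only
   on the Gram matrix of (a, b): adding the coordinates one at a time, a plane
   rotation keeps the pair in the form (alpha X, beta X + gamma Y) with X, Y
   i.i.d. N(0, sigma^2) and (alpha, beta, gamma) a Cholesky factor of the Gram
   matrix.  Rotation invariance of the Gaussian comes from the translation
   invariance of Lebesgue measure, a rotation being a product of three shears.
   When |a| = |b| the Gram matrix is invariant under swapping a and b. *)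

(** * Lebesgue measure: translations, shears and rotations *)

Section lebesgue_translation.
Context {R : realType}.
Local Notation mu := (@lebesgue_measure R).
Local Notation Rm := (measurableTypeR R).

Lemma measurable_addrc (c : R) : measurable_fun setT (fun x : R => x + c).
Proof. exact: measurable_funD. Qed.

Lemma lebesgue_measure_addrc (c : R) (A : set R) : measurable A ->
  mu ((fun x => x + c) @^-1` A) = mu A.
Proof.
move=> mA.
unshelve epose (nu := pushforward mu (fun x : Rm => x + c : Rm)
  : {measure set Rm -> \bar R}); first exact: measurable_addrc.
rewrite [RHS](@lebesgue_measure_unique R nu _ _ mA) //.
move=> _ [[a b] _ <-] /=; rewrite /pushforward /=.
have -> : (fun x => x + c) @^-1` `]a, b] = `]a - c, b - c]%classic.
  by apply/seteqP; split => x /=; rewrite !in_itv /= ?lerBrDr ?ltrBlDr.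
rewrite !lebesgue_measure_itv /= !lte_fin ltrD2r.
by case: ifP => // _; rewrite -!EFinD opprB addrA subrK.
Qed.

Lemma ge0_integral_addrc (c : R) (h : R -> \bar R) :
  measurable_fun setT h -> (forall x, 0 <= h x)%E ->
  (\int[mu]_x h (x + c)%R = \int[mu]_x h x)%E.
Proof.
move=> mh h0.
have mf : measurable_fun setT (fun x : Rm => x + c : Rm) by exact: measurable_addrc.
transitivity (\int[pushforward mu (fun x : Rm => (x + c)%R : Rm)]_x h x)%E.
  by rewrite ge0_integral_pushforward.
apply: eq_measure_integral => A mA _.
exact: lebesgue_measure_addrc.
Qed.

End lebesgue_translation.

Section lebesgue_shear.
Context {R : realType}.
Local Notation mu := (@lebesgue_measure R).
Local Notation Rm := (measurableTypeR R).

Lemma measurable_lincomb2 (a b : R) :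
  measurable_fun setT (fun p : Rm * Rm => a * p.1 + b * p.2 : Rm).
Proof.
apply: measurable_funD.
- by apply: measurable_funM => //; exact: measurable_fst.
- by apply: measurable_funM => //; exact: measurable_snd.
Qed.

Lemma measurable_uncurry_linear (H : R -> R -> \bar R) (a b c e : R) :
  measurable_fun setT (fun p : Rm * Rm => H p.1 p.2) ->
  measurable_fun setT (fun p : Rm * Rm => H (a * p.1 + b * p.2) (c * p.1 + e * p.2)).
Proof.
move=> mH.
exact: measurableT_comp mH
  (measurable_fun_pair (measurable_lincomb2 a b) (measurable_lincomb2 c e)).
Qed.

Variable H : R -> R -> \bar R.
Hypothesis mH : measurable_fun setT (fun p : Rm * Rm => H p.1 p.2).
Hypothesis H_ge0 : forall x y, (0 <= H x y)%E.

Lemma ge0_integral2_shear_snd (q : R) :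
  (\int[mu]_x \int[mu]_y H x (y + q * x) = \int[mu]_x \int[mu]_y H x y)%E.
Proof.
apply: eq_integral => x _.
exact: ge0_integral_addrc (measurable_fun_pair2 x mH) (H_ge0 x).
Qed.

Lemma ge0_integral2_shear_fst (t : R) :
  (\int[mu]_x \int[mu]_y H (x + t * y) y = \int[mu]_x \int[mu]_y H x y)%E.
Proof.
have mHt : measurable_fun setT (fun p : Rm * Rm => H (p.1 + t * p.2) p.2).
  have := measurable_uncurry_linear 1 t 0 1 mH.
  by under eq_fun do rewrite !mul1r mul0r add0r.
rewrite (fubini_tonelli _ mHt) ?(fubini_tonelli _ mH) /=; try by move=> p; exact: H_ge0.
apply: eq_integral => y _.
exact: ge0_integral_addrc (measurable_fun_pair1 y mH) (H_ge0^~ y).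
Qed.

End lebesgue_shear.

Section lebesgue_rotation.
Context {R : realType}.
Local Notation mu := (@lebesgue_measure R).
Local Notation Rm := (measurableTypeR R).

(* A rotation by an angle in [-pi/2, pi/2] is the product of three shears
   with parameters t, -s, t where t = s / (1 + c). *)
Lemma ge0_integral2_rotation (H : R -> R -> \bar R) (c s : R) :
  measurable_fun setT (fun p : Rm * Rm => H p.1 p.2) ->
  (forall x y, 0 <= H x y)%E -> c ^+ 2 + s ^+ 2 = 1 -> 0 <= c ->
  (\int[mu]_x \int[mu]_y H (c * x + s * y)%R (- s * x + c * y)%R =
   \int[mu]_x \int[mu]_y H x y)%E.
Proof.
move=> mH H0 cs c0.
have c1 : 1 + c != 0 by rewrite gt_eqF // ltr_wpDr.
pose t := s / (1 + c).
have tc : t * (1 + c) = s by rewrite divfK.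
have ts : t * s = 1 - c.
  apply: (mulIf c1); rewrite -mulrA [s * _]mulrC mulrA tc.
  by transitivity (1 - c ^+ 2); [rewrite -cs | ]; ring.
pose H1 x y := H (x + t * y) y.
pose H2 x y := H1 x (y + - s * x).
have mH1 : measurable_fun setT (fun p : Rm * Rm => H1 p.1 p.2).
  have := measurable_uncurry_linear 1 t 0 1 mH.
  by under eq_fun do rewrite !mul1r mul0r add0r.
have mH2 : measurable_fun setT (fun p : Rm * Rm => H2 p.1 p.2).
  have := measurable_uncurry_linear 1 0 (- s) 1 mH1.
  by under eq_fun do rewrite !mul1r mul0r addr0 addrC.
transitivity (\int[mu]_x \int[mu]_y H2 (x + t * y)%R y)%E.
  apply: eq_integral => x _; apply: eq_integral => y _; rewrite /H2 /H1.
  have ce : c = 1 - t * s by rewrite ts; ring.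
  congr H; last by rewrite [c in LHS]ce; ring.
  by rewrite -[s in s * y]tc [c in LHS]ce; ring.
rewrite ge0_integral2_shear_fst //; last by move=> x y; exact: H0.
rewrite /H2 ge0_integral2_shear_snd //; last by move=> x y; exact: H0.
exact: ge0_integral2_shear_fst.
Qed.

End lebesgue_rotation.

(** * Rotation invariance of the centered normal distribution *)

Section normal_density.
Context {R : realType} (sigma : R).
Local Notation mu := (@lebesgue_measure R).
Local Notation N := (normal_prob 0 sigma).
Local Notation phi := (normal_pdf 0 sigma).

Lemma ge0_integral_normal_prob (F : R -> \bar R) :
  measurable_fun setT F -> (forall x, 0 <= F x)%E ->
  (\int[N]_x F x = \int[mu]_x (F x * (phi x)%:E))%E.
Proof.
move=> mF F0.
(* [N] is defined by its density [phi]; the library's change of variables is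
   stated for the Radon-Nikodym derivative, which is [phi] almost everywhere. *)
have Nmu := normal_prob_dominates 0 sigma.
set g := Radon_Nikodym_SigmaFinite.f N mu.
have mg : measurable_fun setT g.
  exact: measurable_int (Radon_Nikodym_SigmaFinite.f_integrable Nmu).
have g0 := Radon_Nikodym_SigmaFinite.f_ge0 Nmu.
have gE : ae_eq mu setT (fun x => (phi x)%:E) g.
  apply: integral_ae_eq => //; first exact: integrable_normal_pdf.
  move=> A _ mA.
  by rewrite -(Radon_Nikodym_SigmaFinite.f_integral Nmu mA) /normal_prob.
transitivity (\int[mu]_x (F x * g x))%E.
  exact/esym/(Radon_Nikodym_SigmaFinite.change_of_variables Nmu F0 measurableT mF).
apply: ge0_ae_eq_integral => //.
- exact: emeasurable_funM.
- apply: emeasurable_funM => //.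
  by apply/measurable_EFinP; exact: measurable_normal_pdf.
- by move=> x _; rewrite mule_ge0.
- by move=> x _; rewrite mule_ge0 // lee_fin normal_pdf_ge0.
- exact/ae_eqe_mul2l/ae_eq_sym.
Qed.

End normal_density.

Section normal_rotation.
Context {R : realType} (sigma : R).
Hypothesis sigma_neq0 : sigma != 0.
Local Notation mu := (@lebesgue_measure R).
Local Notation Rm := (measurableTypeR R).
Local Notation N := (normal_prob 0 sigma).
Local Notation phi := (normal_pdf 0 sigma).

Lemma normal_pdf0_rotation (c s x y : R) : c ^+ 2 + s ^+ 2 = 1 ->
  phi (c * x + s * y) * phi (- s * x + c * y) = phi x * phi y.
Proof.
move=> cs; rewrite /normal_pdf (negbTE sigma_neq0) /normal_fun !subr0.
rewrite mulrACA [RHS]mulrACA -!expRD; congr (_ * expR _).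
rewrite -!mulNr -!mulrDl; congr (_ * _).
transitivity (- ((c ^+ 2 + s ^+ 2) * (x ^+ 2 + y ^+ 2))); first by ring.
by rewrite cs; ring.
Qed.

Lemma ge0_integral2_normal_prob (h : R -> R -> \bar R) :
  measurable_fun setT (fun p : Rm * Rm => h p.1 p.2) -> (forall x y, 0 <= h x y)%E ->
  (\int[N]_x \int[N]_y h x y =
   \int[mu]_x \int[mu]_y (h x y * (phi x * phi y)%:E))%E.
Proof.
move=> mh h0.
rewrite ge0_integral_normal_prob; last 2 first.
- exact: (@measurable_fun_fubini_tonelli_F _ _ Rm Rm R N _ mh (fun p => h0 p.1 p.2)).
- by move=> x; apply: integral_ge0 => y _.
apply: eq_integral => x _.
rewrite ge0_integral_normal_prob //; last exact: measurable_fun_pair2 x mh.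
rewrite -ge0_integralZr //; last 3 first.
- apply: emeasurable_funM; first exact: measurable_fun_pair2 x mh.
  by apply/measurable_EFinP; exact: measurable_normal_pdf.
- by move=> y _; rewrite mule_ge0 // lee_fin normal_pdf_ge0.
- by rewrite lee_fin normal_pdf_ge0.
apply: eq_integral => y _.
by rewrite -muleA -EFinM [phi y * _]mulrC.
Qed.

Lemma ge0_integral2_normal_prob_rotation (f h : R -> R -> \bar R) (c s : R) :
  measurable_fun setT (fun p : Rm * Rm => h p.1 p.2) -> (forall x y, 0 <= h x y)%E ->
  c ^+ 2 + s ^+ 2 = 1 -> 0 <= c ->
  (forall x y, f x y = h (c * x + s * y) (- s * x + c * y)) ->
  (\int[N]_x \int[N]_y f x y = \int[N]_x \int[N]_y h x y)%E.
Proof.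
move=> mh h0 cs c0 fE.
under eq_integral do under eq_integral do rewrite fE.
rewrite !ge0_integral2_normal_prob //; last exact: measurable_uncurry_linear.
pose G x y := (h x y * (phi x * phi y)%:E)%E.
have mG : measurable_fun setT (fun p : Rm * Rm => G p.1 p.2).
  apply: emeasurable_funM => //; apply/measurable_EFinP.
  by apply: measurable_funM; apply: measurableT_comp (measurable_normal_pdf _ _) _;
    [exact: measurable_fst | exact: measurable_snd].
have G0 x y : (0 <= G x y)%E.
  by rewrite mule_ge0 // lee_fin mulr_ge0 // normal_pdf_ge0.
rewrite -(ge0_integral2_rotation mG G0 cs c0).
by apply: eq_integral => x _; apply: eq_integral => y _; rewrite /G normal_pdf0_rotation.
Qed.

End normal_rotation.

(** * The law of a pair of Gaussian linear forms *)

Lemma polar_decomposition {R : realType} (p q : R) : 0 <= p ->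
  exists r c s, [/\ 0 <= r, c ^+ 2 + s ^+ 2 = 1, 0 <= c, r * c = p & r * s = q].
Proof.
move=> p0; pose r := Num.sqrt (p ^+ 2 + q ^+ 2).
have r0 : 0 <= r by exact: sqrtr_ge0.
have r2 : r ^+ 2 = p ^+ 2 + q ^+ 2 by rewrite sqr_sqrtr // addr_ge0 // sqr_ge0.
have [rz|rnz] := eqVneq r 0.
  have [p00 q00] : p = 0 /\ q = 0.
    move/eqP: r2; rewrite rz expr0n eq_sym paddr_eq0 ?sqr_ge0 //.
    by rewrite !sqrf_eq0 => /andP[/eqP -> /eqP ->].
  by exists r, 1, 0; rewrite rz p00 q00 expr1n expr0n !mul0r addr0.
exists r, (p / r), (q / r); split => //.
- by rewrite !expr_div_n -mulrDl -r2 divff // expf_neq0.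
- by rewrite divr_ge0.
- by rewrite mulrC divfK.
- by rewrite mulrC divfK.
Qed.

Section indic2.
Context {R : realType}.
Local Notation Rm := (measurableTypeR R).

Definition indic2 (A : set (R * R)) (u v : R) : \bar R := (\1_A (u, v))%:E.

Lemma indic2_ge0 A u v : (0 <= indic2 A u v)%E.
Proof. by rewrite lee_fin. Qed.

Lemma measurable_indic2 d (T : measurableType d) (A : set (R * R)) (f g : T -> R) :
  measurable A -> measurable_fun setT f -> measurable_fun setT g ->
  measurable_fun setT (fun t => indic2 A (f t) (g t)).
Proof.
move=> mA mf mg; apply/measurable_EFinP.
exact: measurableT_comp (measurable_indic mA) (measurable_fun_pair mf mg).
Qed.

Lemma measurable_indic2_affine A (a1 b1 e1 a2 b2 e2 : R) (F : Rm * Rm -> \bar R) :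
  measurable A ->
  (forall p, F p = indic2 A (a1 * p.1 + b1 * p.2 + e1) (a2 * p.1 + b2 * p.2 + e2)) ->
  measurable_fun setT F.
Proof.
move=> mA /funext ->.
by apply: measurable_indic2 => //; apply: measurable_funD => //;
  exact: measurable_lincomb2.
Qed.

Lemma measurable_indic2_linear3 A (a1 b1 c1 a2 b2 c2 : R) (F : (Rm * Rm) * Rm -> \bar R) :
  measurable A ->
  (forall q, F q = indic2 A (a1 * q.1.1 + b1 * q.1.2 + c1 * q.2)
                            (a2 * q.1.1 + b2 * q.1.2 + c2 * q.2)) ->
  measurable_fun setT F.
Proof.
have mfst : measurable_fun setT (fun q : (Rm * Rm) * Rm => q.1).
  exact: measurable_fst.
move=> mA /funext ->.
apply: measurable_indic2 => //; apply: measurable_funD.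
- exact: measurableT_comp (measurable_lincomb2 _ _) mfst.
- by apply: measurable_funM => //; exact: measurable_snd.
- exact: measurableT_comp (measurable_lincomb2 _ _) mfst.
- by apply: measurable_funM => //; exact: measurable_snd.
Qed.

End indic2.

Arguments measurable_indic2_affine {R A} a1 b1 e1 a2 b2 e2 {F}.
Arguments measurable_indic2_linear3 {R A} a1 b1 c1 a2 b2 c2 {F}.

Lemma ge0_integral3_swap12 d1 d2 d3 (T1 : measurableType d1) (T2 : measurableType d2)
  (T3 : measurableType d3) (R : realType) (m1 : {sigma_finite_measure set T1 -> \bar R})
  (m2 : {sigma_finite_measure set T2 -> \bar R}) (m3 : {sigma_finite_measure set T3 -> \bar R})
  (f : T1 -> T2 -> T3 -> \bar R) :
  measurable_fun setT (fun q : (T1 * T2) * T3 => f q.1.1 q.1.2 q.2) ->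
  (forall x y w, 0 <= f x y w)%E ->
  (\int[m1]_x \int[m2]_y \int[m3]_w f x y w = \int[m2]_y \int[m1]_x \int[m3]_w f x y w)%E.
Proof.
move=> mf f0.
have mF := @measurable_fun_fubini_tonelli_F _ _ _ _ _ m3 _ mf (fun q => f0 q.1.1 q.1.2 q.2).
have F0 (p : T1 * T2) : (0 <= \int[m3]_w f p.1 p.2 w)%E by exact: integral_ge0.
exact: fubini_tonelli mF F0.
Qed.

Section gauss_pair.
Context {R : realType}.
Local Notation Rm := (measurableTypeR R).

Definition gauss_pair (a b c : R) (p : Rm * Rm) : R * R := (a * p.1, b * p.1 + c * p.2).

Lemma measurable_gauss_pair a b c : measurable_fun setT (gauss_pair a b c).
Proof.
apply/measurable_fun_pair; last exact: measurable_lincomb2.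
by apply: measurable_funM => //; exact: measurable_fst.
Qed.

HB.instance Definition _ a b c :=
  isMeasurableFun.Build _ _ _ _ (gauss_pair a b c) (measurable_gauss_pair a b c).

(* [[a, 0], [b, c]] is a Cholesky factor of [[v11, v12], [v12, v22]], the
   covariance matrix (up to sigma^2) of [gauss_pair a b c] applied to a pair of
   i.i.d. N(0, sigma^2) variables. *)
Definition cholesky2 (a b c v11 v12 v22 : R) :=
  [/\ 0 <= a, 0 <= c, a ^+ 2 = v11, a * b = v12 & b ^+ 2 + c ^+ 2 = v22].

Variable sigma : R.
Hypothesis sigma_neq0 : sigma != 0.
Local Notation N := (normal_prob 0 sigma).

Definition gauss_pair_law a b c := distribution (N \x N)%E (gauss_pair a b c).

HB.instance Definition _ a b c := Probability.on (gauss_pair_law a b c).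

Lemma gauss_pair_lawE a b c A : measurable A ->
  gauss_pair_law a b c A = (\int[N]_x \int[N]_y indic2 A (a * x) (b * x + c * y))%E.
Proof.
move=> mA.
have mpre : measurable (gauss_pair a b c @^-1` A).
  by rewrite -[X in measurable X]setTI; exact: measurable_gauss_pair.
rewrite /gauss_pair_law /distribution /pushforward.
rewrite -(setIT (gauss_pair a b c @^-1` A)) -integral_indic // fubini_tonelli1 //.
exact/measurable_EFinP/measurable_indic.
Qed.

Lemma gauss_pair_law_zero A : measurable A -> gauss_pair_law 0 0 0 A = (\1_A (0, 0))%:E.
Proof.
move=> mA; rewrite gauss_pair_lawE //.
have intN c : (\int[N]_y cst c y = c)%E.
  by rewrite integral_cst // -[RHS]mule1; congr (_ * _)%E; exact: probability_setT.
transitivity (\int[N]_x cst (indic2 A 0 0) x)%E; last exact: intN.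
apply: eq_integral => x _; rewrite -[RHS](intN (indic2 A 0 0)).
by apply: eq_integral => y _; rewrite !mul0r addr0.
Qed.

(* Rotating (x, w) by (c, s), where r c = al and r s = a, turns [al x + a w]
   into [r u]; rotating (y, v) then merges the two independent contributions
   [de v + ga y] to the second coordinate into one. *)
Lemma normal_prob3_cholesky_update al be ga a b v11 v12 v22 :
  cholesky2 al be ga v11 v12 v22 -> exists r be' ga',
  cholesky2 r be' ga' (v11 + a ^+ 2) (v12 + a * b) (v22 + b ^+ 2) /\
  forall A, measurable A ->
    (\int[N]_x \int[N]_y \int[N]_w indic2 A (al * x + a * w) (be * x + ga * y + b * w) =
     \int[N]_x \int[N]_y indic2 A (r * x) (be' * x + ga' * y))%E.
Proof.
case=> al0 ga0 <- <- <-.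
have [r [c [s [r0 cs c0 rc rs]]]] := polar_decomposition a al0.
pose be' := be * c + b * s; pose de := b * c - be * s.
have [g [c' [s' [g0 cs' c0' gc gs]]]] := polar_decomposition de ga0.
exists r, be', g; split.
  split => //.
  - by rewrite -rc -rs -[LHS]mulr1 -cs; ring.
  - by rewrite -[in RHS]rc -[in RHS]rs /be'; ring.
  - have -> : g ^+ 2 = ga ^+ 2 + de ^+ 2 by rewrite -gc -gs -[LHS]mulr1 -cs'; ring.
    transitivity ((be ^+ 2 + b ^+ 2) * (c ^+ 2 + s ^+ 2) + ga ^+ 2).
      by rewrite /be' /de; ring.
    by rewrite cs; ring.
move=> A mA.
have h0 x y := indic2_ge0 A x y.
etransitivity; first apply: ge0_integral3_swap12 => //.
  by apply: (measurable_indic2_linear3 al 0 a be ga b mA) => q; congr indic2; ring.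
transitivity (\int[N]_y \int[N]_u \int[N]_v indic2 A (r * u) (be' * u + de * v + ga * y))%E.
  apply: eq_integral => y _.
  apply: (ge0_integral2_normal_prob_rotation sigma_neq0 _ _ cs c0) => // [|x w].
    by apply: (measurable_indic2_affine r 0 0 be' de (ga * y) mA) => p; congr indic2; ring.
  congr indic2; first by rewrite -rc -rs; ring.
  by rewrite /be' /de -[be * x]mulr1 -[b * w]mulr1 -cs; ring.
etransitivity; first apply: ge0_integral3_swap12 => //.
  by apply: (measurable_indic2_linear3 0 r 0 ga be' de mA) => q; congr indic2; ring.
apply: eq_integral => u _.
transitivity (\int[N]_y \int[N]_v indic2 A (r * u) (be' * u + g * y))%E.
  apply: (ge0_integral2_normal_prob_rotation sigma_neq0 _ _ cs' c0') => // [|y v].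
    by apply: (measurable_indic2_affine 0 0 (r * u) g 0 (be' * u) mA) => p; congr indic2; ring.
  by congr indic2; rewrite -gc -gs; ring.
apply: eq_integral => y _.
by rewrite integral_cst //= probability_setT mule1.
Qed.

Lemma gauss_pair_law_null_fst b c A : 0 <= c -> measurable A ->
  gauss_pair_law 0 b c A = gauss_pair_law 0 0 (Num.sqrt (b ^+ 2 + c ^+ 2)) A.
Proof.
move=> c0 mA; have h0 x y := indic2_ge0 A x y.
have [r [co [si [r0 cs co0 rc rs]]]] := polar_decomposition (- b) c0.
have -> : Num.sqrt (b ^+ 2 + c ^+ 2) = r.
  have -> : b ^+ 2 + c ^+ 2 = r ^+ 2.
    transitivity (r ^+ 2 * (co ^+ 2 + si ^+ 2)); last by rewrite cs mulr1.
    by rewrite -[b]opprK -rs -rc; ring.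
  by rewrite sqrtr_sqr ger0_norm.
rewrite (gauss_pair_lawE 0 b c mA) (gauss_pair_lawE 0 0 r mA).
apply: (ge0_integral2_normal_prob_rotation sigma_neq0 _ _ cs co0) => // [|x y].
  by apply: (measurable_indic2_affine 0 0 0 0 r 0 mA) => p; congr indic2; ring.
by congr indic2; rewrite ?mul0r // -[b]opprK -rs -rc; ring.
Qed.

Lemma gauss_pair_law_unique a b c a' b' c' v11 v12 v22 A :
  cholesky2 a b c v11 v12 v22 -> cholesky2 a' b' c' v11 v12 v22 -> measurable A ->
  gauss_pair_law a b c A = gauss_pair_law a' b' c' A.
Proof.
have sqr_inj x y : 0 <= x -> 0 <= y -> x ^+ 2 = y ^+ 2 -> x = y.
  by move=> x0 y0 /eqP; rewrite eqrXn2 // => /eqP.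
case=> a0 c0 <- <- <- [a0' c0' a2 /esym ab /esym bc] mA.
have aa' : a' = a by apply: sqr_inj.
subst a'.
have [a00|anz] := eqVneq a 0.
  by rewrite a00 (gauss_pair_law_null_fst b c0 mA) (gauss_pair_law_null_fst b' c0' mA) bc.
have bb' : b' = b by apply: (mulfI anz); rewrite ab.
rewrite bb' in bc *.
by have -> : c' = c by apply: sqr_inj => //; exact/esym/(addrI _ bc).
Qed.

Definition shift_pair (a b : R) (q : (R * R) * Rm) : R * R :=
  (q.1.1 + a * q.2, q.1.2 + b * q.2).

Lemma measurable_shift_pair a b : measurable_fun setT (shift_pair a b).
Proof.
have m1 : measurable_fun setT (fun q : (R * R) * Rm => q.1) by exact: measurable_fst.
apply/measurable_fun_pair; apply: measurable_funD.
- exact: measurableT_comp measurable_fst m1.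
- by apply: measurable_funM => //; exact: measurable_snd.
- exact: measurableT_comp measurable_snd m1.
- by apply: measurable_funM => //; exact: measurable_snd.
Qed.

Lemma gauss_pair_law_add al be ga a b v11 v12 v22 :
  cholesky2 al be ga v11 v12 v22 -> exists r be' ga',
  cholesky2 r be' ga' (v11 + a ^+ 2) (v12 + a * b) (v22 + b ^+ 2) /\
  forall A, measurable A ->
    (gauss_pair_law al be ga \x N)%E (shift_pair a b @^-1` A) = gauss_pair_law r be' ga' A.
Proof.
move=> /(normal_prob3_cholesky_update a b) [r [be' [ga' [ch E]]]].
exists r, be', ga'; split => // A mA.
have mX : measurable (shift_pair a b @^-1` A).
  by rewrite -[X in measurable X]setTI; exact: measurable_shift_pair.
have mNX : measurable_fun setT (N \o xsection (shift_pair a b @^-1` A)).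
  exact: measurable_fun_xsection.
rewrite gauss_pair_lawE // -E // /product_measure1 /= ge0_integral_distribution //.
rewrite (fubini_tonelli1 (fun q => N (xsection (shift_pair a b @^-1` A)
                                              (gauss_pair al be ga q)))); last 2 first.
- exact: measurableT_comp mNX (measurable_gauss_pair _ _ _).
- by move=> q; exact: measure_ge0.
apply: eq_integral => x _; apply: eq_integral => y _.
rewrite -(setIT (xsection _ _)) -integral_indic //; last exact: measurable_xsection.
by apply: eq_integral => w _; rewrite /indic2 !indicE mem_xsection.
Qed.

End gauss_pair.

Section big_ord_threshold.
Context {T : Type} {idx : T} (op : Monoid.com_law idx) (n k : nat) (i0 : 'I_n).
Hypothesis i0k : val i0 = k.

Lemma big_ord_ltS (F : 'I_n -> T) :
  \big[op/idx]_(i < n | (i < k.+1)%N) F i = op (\big[op/idx]_(i < n | (i < k)%N) F i) (F i0).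
Proof.
rewrite (bigD1 i0) /= ?i0k // Monoid.mulmC; congr (op _ (F i0)); apply: eq_bigl => i.
by rewrite ltnS leq_eqVlt -(inj_eq val_inj) /= i0k; case: ltngtP.
Qed.

Lemma big_ord_geq (F : 'I_n -> T) :
  \big[op/idx]_(i < n | (k <= i)%N) F i = op (F i0) (\big[op/idx]_(i < n | (k < i)%N) F i).
Proof.
rewrite (bigD1 i0) /= ?i0k //; congr (op (F i0) _); apply: eq_bigl => i.
by rewrite -(inj_eq val_inj) /= i0k; case: ltngtP.
Qed.

End big_ord_threshold.

Lemma product_measure1_mscaler d1 d2 (T1 : measurableType d1) (T2 : measurableType d2)
  (R : realType) (m1 : {measure set T1 -> \bar R}) (m2 : {sigma_finite_measure set T2 -> \bar R})
  (k : R) (k0 : 0 <= k) (X : set (T1 * T2)) : measurable X ->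
  (m1 \x mscale (NngNum k0) m2)%E X = (k%:E * (m1 \x m2) X)%E.
Proof.
move=> mX; rewrite /product_measure1 /= -ge0_integralZl //.
exact: measurable_fun_xsection.
Qed.

Section prefix_law.
Context d (T : measurableType d) (R : realType) (P : probability T R)
  (n : nat) (sigma : R) (z : 'I_n -> T -> R).
Hypothesis hz : iid_gaussian_vector P sigma z.
Hypothesis sigma_neq0 : sigma != 0.
Local Notation N := (normal_prob 0 sigma).
Local Notation law := (gauss_pair_law sigma).
Local Notation Rm := (measurableTypeR R).

Definition partial_lincomb (a : 'I_n -> R) k t := \sum_(i < n | (i < k)%N) a i * z i t.

Definition partial_dot (a b : 'I_n -> R) k := \sum_(i < n | (i < k)%N) a i * b i.

Lemma measurable_partial_lincomb a k : measurable_fun setT (partial_lincomb a k).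
Proof.
have [mz _ _] := hz.
rewrite /partial_lincomb; under eq_fun do rewrite big_mkcond /=.
apply: measurable_sum => i; case: (i < k)%N => //.
exact: measurable_funM.
Qed.

(* The invariant of the induction on k: the first k coordinates enter only
   through the pair of partial sums, which is independent of the others. *)
Definition prefix_law_spec (a b : 'I_n -> R) k := exists al be ga,
  cholesky2 al be ga (partial_dot a a k) (partial_dot a b k) (partial_dot b b k) /\
  forall (A : set (R * R)) (B : 'I_n -> set R), measurable A -> (forall i, measurable (B i)) ->
    P [set t | A (partial_lincomb a k t, partial_lincomb b k t) /\
               forall i : 'I_n, (k <= i)%N -> B i (z i t)] =
    (law al be ga A * \prod_(i < n | (k <= i)%N) N (B i))%E.

Lemma prefix_law_spec0 a b : prefix_law_spec a b 0.
Proof.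
have [_ mz_law mz_indep] := hz.
have S0 c t : partial_lincomb c 0 t = 0 by rewrite /partial_lincomb big_pred0.
exists 0, 0, 0; split.
  by split; rewrite // /partial_dot big_pred0 // ?expr0n ?mul0r ?addr0.
move=> A B mA mB; rewrite gauss_pair_law_zero // indicE.
have [A00|A00] := boolP ((0, 0) \in A).
  rewrite mul1e.
  transitivity (P [set t | forall i, B i (z i t)]).
    apply: congr1; apply/seteqP; split => t /=; rewrite !S0; first by case=> _ + i; apply.
    by move=> Bz; split => [|i _]; [exact/set_mem | exact: Bz].
  by rewrite mz_indep // big_mkcond; apply: eq_bigr => i _; rewrite mz_law.
rewrite mul0e -(measure0 P); apply: congr1; apply/seteqP; split => t //= [].
by rewrite !S0 => /mem_set; rewrite (negbTE A00).
Qed.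

Section prefix_step.
Variables (a b : 'I_n -> R) (k : nat) (i0 : 'I_n) (al be ga : R).
Hypothesis i0k : val i0 = k.
Hypothesis prefix_law_k : forall (A : set (R * R)) (B : 'I_n -> set R),
  measurable A -> (forall i, measurable (B i)) ->
  P [set t | A (partial_lincomb a k t, partial_lincomb b k t) /\
             forall i : 'I_n, (k <= i)%N -> B i (z i t)] =
  (law al be ga A * \prod_(i < n | (k <= i)%N) N (B i))%E.
Variable B : 'I_n -> set R.
Hypothesis mB : forall i, measurable (B i).

Let rest := [set t | forall i : 'I_n, (k < i)%N -> B i (z i t)].
Let W t : (R * R) * Rm := ((partial_lincomb a k t, partial_lincomb b k t), z i0 t).

Let measurable_rest : measurable rest.
Proof.
have [mz _ _] := hz.
rewrite [rest](_ : _ = \bigcap_(i in [set i : 'I_n | (k < i)%N]) (z i @^-1` B i)) //.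
apply: fin_bigcap_measurable; first exact: finite_finset.
by move=> i _; rewrite -[X in measurable X]setTI; exact: mz.
Qed.

Let measurable_W : measurable_fun setT W.
Proof.
have [mz _ _] := hz.
apply: measurable_fun_pair.
  by apply: measurable_fun_pair; exact: measurable_partial_lincomb.
(* [R] and [Rm] carry the same sigma-algebra, under different displays. *)
by move=> mD Y mY; exact: mz i0 mD Y mY.
Qed.

Lemma prefix_law_rect (A1 : set (R * R)) (C : set R) : measurable A1 -> measurable C ->
  P (W @^-1` (A1 `*` C) `&` rest) =
  (law al be ga A1 * (N C * \prod_(i < n | (k < i)%N) N (B i)))%E.
Proof.
move=> mA1 mC; pose B' i := if i == i0 then C else B i.
have mB' i : measurable (B' i) by rewrite /B'; case: eqP.
have -> : (N C * \prod_(i < n | (k < i)%N) N (B i) = \prod_(i < n | (k <= i)%N) N (B' i))%E.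
  rewrite (big_ord_geq _ i0k) /B' eqxx; congr (_ * _)%E; apply: eq_bigr => i ki.
  by case: eqP => // ei; rewrite ei i0k ltnn in ki.
rewrite -prefix_law_k //; apply: congr1; apply/seteqP; split => t /=.
  move=> [[At Ct] Rt]; split => // i; rewrite /B'.
  case: eqP => [-> //| /eqP ne ki]; apply: Rt.
  by rewrite ltn_neqAle ki andbT -i0k (inj_eq val_inj) eq_sym.
move=> [At Bt]; split; first by split => //; have := Bt i0; rewrite /B' eqxx i0k; apply.
move=> i ki; have := Bt i (ltnW ki); rewrite /B'.
by case: eqP => // ei; rewrite ei i0k ltnn in ki.
Qed.

Lemma prefix_law_step_eq A : measurable A ->
  P [set t | A (partial_lincomb a k.+1 t, partial_lincomb b k.+1 t) /\ rest t] =
  (\prod_(i < n | (k < i)%N) N (B i) *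
   (law al be ga \x N) (shift_pair (a i0) (b i0) @^-1` A))%E.
Proof.
move=> mA.
(* By uniqueness of product measures, the joint law of the partial sums and
   of [z i0] on the event [rest] is [law al be ga \x N] scaled by [K]. *)
have [K [K0 KE]] : exists K : R, 0 <= K /\ (\prod_(i < n | (k < i)%N) N (B i))%E = K%:E.
  exists (fine (\prod_(i < n | (k < i)%N) N (B i))%E); rewrite fineK.
    by split => //; apply/fine_ge0/prode_ge0.
  by apply: prode_fin_num => i _; apply: fin_num_measure; exact: mB.
unshelve epose (nu := pushforward (mrestr P measurable_rest) W
  : {measure set ((R * R) * Rm) -> \bar R}); first exact: measurable_W.
have nu_rect A1 C : measurable A1 -> measurable C ->
    nu (A1 `*` C) = (law al be ga A1 * mscale (NngNum K0) N C)%E.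
  move=> mA1 mC; rewrite /nu /= /pushforward /mrestr prefix_law_rect // KE.
  by rewrite /mscale /= [(N C * _)%E]muleC.
have mX : measurable (shift_pair (a i0) (b i0) @^-1` A).
  by rewrite -[X in measurable X]setTI; exact: measurable_shift_pair.
rewrite KE -product_measure1_mscaler // (product_measure_unique nu_rect) //.
apply: congr1; apply/seteqP; split => t /=;
  by rewrite /partial_lincomb !(big_ord_ltS _ i0k).
Qed.

End prefix_step.

Lemma prefix_law_specS a b k : (k < n)%N ->
  prefix_law_spec a b k -> prefix_law_spec a b k.+1.
Proof.
move=> kn [al [be [ga [ch HP]]]].
pose i0 := Ordinal kn; have i0k : val i0 = k by [].
have [r [be' [ga' [ch' law_add]]]] := gauss_pair_law_add sigma_neq0 (a i0) (b i0) ch.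
exists r, be', ga'; split.
  by rewrite !expr2 in ch'; rewrite /partial_dot !(big_ord_ltS _ i0k).
move=> A B mA mB; rewrite -law_add // muleC.
exact: prefix_law_step_eq.
Qed.

Lemma lincomb_pair_law a b : exists al be ga,
  cholesky2 al be ga (\sum_i a i * a i) (\sum_i a i * b i) (\sum_i b i * b i) /\
  forall A, measurable A ->
    P [set t | A (\sum_i a i * z i t, \sum_i b i * z i t)] = law al be ga A.
Proof.
have sum_all (F : 'I_n -> R) : \sum_(i < n | (i < n)%N) F i = \sum_i F i.
  by apply: eq_bigl => i; rewrite ltn_ord.
have spec k : (k <= n)%N -> prefix_law_spec a b k.
  elim: k => [_|k IHk kn]; first exact: prefix_law_spec0.
  exact: prefix_law_specS kn (IHk (ltnW kn)).
have [al [be [ga [ch HP]]]] := spec n (leqnn n).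
exists al, be, ga; split; first by rewrite -!sum_all.
move=> A mA; have := HP A (fun=> setT) mA (fun=> measurableT).
rewrite big_pred0 => [|i]; last by rewrite leqNgt ltn_ord.
rewrite mule1 => <-; apply: congr1; apply/seteqP; split => t /=.
  by rewrite /partial_lincomb !sum_all.
by rewrite /partial_lincomb !sum_all => -[].
Qed.

Lemma lincomb_pair_swap a b : \sum_i a i ^+ 2 = \sum_i b i ^+ 2 ->
  forall A, measurable A ->
    P [set t | A (\sum_i a i * z i t, \sum_i b i * z i t)] =
    P [set t | A (\sum_i b i * z i t, \sum_i a i * z i t)].
Proof.
move=> hab A mA.
have [al [be [ga [ch lawE]]]] := lincomb_pair_law a b.
have [al' [be' [ga' [ch' lawE']]]] := lincomb_pair_law b a.
rewrite (lawE _ mA) (lawE' _ mA).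
apply: (gauss_pair_law_unique sigma_neq0 ch _ mA).
have sqE (c : 'I_n -> R) : \sum_i c i * c i = \sum_i c i ^+ 2.
  by apply: eq_bigr => i _; rewrite expr2.
have baE : \sum_i b i * a i = \sum_i a i * b i.
  by apply: eq_bigr => i _; rewrite mulrC.
have {}hab : \sum_i a i * a i = \sum_i b i * b i by rewrite !sqE.
by rewrite {1}hab -{2}hab -baE.
Qed.

Lemma affine_pair_swap a b (m : R) : \sum_i a i ^+ 2 = \sum_i b i ^+ 2 ->
  eq_in_law2 P (fun t => (m + \sum_i a i * z i t, m + \sum_i b i * z i t))
               (fun t => (m + \sum_i b i * z i t, m + \sum_i a i * z i t)).
Proof.
move=> hab A mA; pose A' := [set q : R * R | A (m + q.1, m + q.2)].
have mA' : measurable A'.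
  have mshift : measurable_fun setT (fun q : R * R => (m + q.1, m + q.2)).
    by apply/measurable_fun_pair; apply: measurable_funD.
  by rewrite -[A']setTI; exact: mshift.
exact: lincomb_pair_swap hab A' mA'.
Qed.

End prefix_law.

(** * The knockoff coefficients *)

Lemma mx_subE {R : zmodType} m n (A B : 'M[R]_(m, n)) i k :
  (A - B) i k = A i k - B i k.
Proof. by rewrite !mxE. Qed.

Lemma mulmx_col_entry {R : pzRingType} m n (B : 'M[R]_(m, n)) (c : 'cV[R]_n)
  (w : 'I_n -> R) (i : 'I_m) :
  (B *m (c + \col_k w k)) i 0 = (B *m c) i 0 + \sum_k B i k * w k.
Proof.
rewrite mulmxDr mxE [X in _ + X]mxE; congr (_ + _).
by apply: eq_bigr => k _; rewrite mxE.
Qed.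

Section knockoff_algebra.
Context {R : comRingType} (n p : nat) (X Xt : 'M[R]_(n, p)) (s : 'rV[R]_p) (j : 'I_p).
Hypothesis Xt_gram : Xt^T *m X = X^T *m X - diag_mx s.

Lemma knockoff_gram_null_coef (beta : 'cV[R]_p) : beta j 0 = 0 ->
  (Xt^T *m (X *m beta)) j 0 = (X^T *m (X *m beta)) j 0.
Proof.
move=> bj0; rewrite mulmxA Xt_gram mulmxBl -mulmxA mx_subE.
by rewrite mul_diag_mx [in X in _ - X]mxE bj0 mulr0 subr0.
Qed.

Hypothesis X_unit : (X^T *m X) j j = 1.
Hypothesis Xt_unit : (Xt^T *m Xt) j j = 1.

Lemma knockoff_coef_norm (G : 'M[R]_p) :
  \sum_i ((G *m X^T) j i) ^+ 2 =
  \sum_i ((G *m X^T) j i + G j j * (Xt i j - X i j)) ^+ 2.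
Proof.
pose u i := (G *m X^T) j i; pose w i := Xt i j - X i j.
have X_Xt : X^T *m Xt = X^T *m X - diag_mx s.
  by rewrite -[LHS]trmxK trmx_mul trmxK Xt_gram linearB /= tr_diag_mx trmx_mul trmxK.
have uw : \sum_i u i * w i = - (G j j * s 0 j).
  transitivity ((G *m X^T *m Xt) j j - (G *m X^T *m X) j j).
    by rewrite !mxE -sumrB; apply: eq_bigr => i _; rewrite mulrBr.
  by rewrite -!mulmxA X_Xt mulmxBr mx_subE mul_mx_diag [in X in _ - X - _]mxE; ring.
have ww : \sum_i w i ^+ 2 = 2 * s 0 j.
  transitivity ((Xt^T *m Xt) j j + (X^T *m X) j j - 2 * (Xt^T *m X) j j).
    rewrite !mxE mulr_sumr -!big_split -sumrB /=; apply: eq_bigr => i _.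
    by rewrite /w !mxE; ring.
  by rewrite Xt_unit Xt_gram mx_subE X_unit mxE eqxx mulr1n; ring.
transitivity (\sum_i (u i ^+ 2 + (2 * G j j) * (u i * w i) + G j j ^+ 2 * w i ^+ 2)).
  by rewrite !big_split /= -!mulr_sumr uw ww; ring.
by apply: eq_bigr => i _; rewrite /u /w; ring.
Qed.

End knockoff_algebra.

Unset Implicit Arguments. Set Strict Implicit. Set Printing Implicit Defensive.

Theorem corollary2p1 (R : realType) (d : measure_display)
  (T : measurableType d) (P : probability T R) (n p : nat)
  (X : 'M[R]_(n, p)) (beta : 'cV[R]_p) (sigma : R) (z : 'I_n -> T -> R)
  (lambda : R) (s : 'rV[R]_p) (Xt : 'M[R]_(n, p)) (j : 'I_p) :
  \rank X = p ->
  (forall k : 'I_p, (X^T *m X) k k = 1) ->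
  0 < sigma ->
  iid_gaussian_vector P sigma z ->
  0 < lambda ->
  (forall k : 'I_p, 0 <= s 0 k) ->
  psd (X^T *m X - diag_mx s) ->
  Xt^T *m X = X^T *m X - diag_mx s ->
  (forall k : 'I_p, (Xt^T *m Xt) k k = 1) ->
  beta j 0 = 0 ->
  let Sigma := X^T *m X in
  let Sigma_l := Sigma + lambda%:M in
  let y : T -> 'cV[R]_n := fun t => X *m beta + \col_i z i t in
  let beta_hat : T -> 'cV[R]_p := fun t => invmx Sigma_l *m X^T *m y t in
  let beta_tilde_j : T -> R := fun t =>
    beta_hat t j 0 + invmx Sigma_l j j * ((Xt^T *m y t) j 0 - (X^T *m y t) j 0) in
  eq_in_law2 P (fun t => (beta_hat t j 0, beta_tilde_j t))
               (fun t => (beta_tilde_j t, beta_hat t j 0)).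
Proof.
move=> _ X_unit sigma_gt0 hz _ _ _ Xt_gram Xt_unit beta_j0 Sigma Sigma_l y beta_hat beta_tilde.
pose G := invmx Sigma_l.
pose u i := (G *m X^T) j i.
pose v i := u i + G j j * (Xt i j - X i j).
pose m0 := (G *m X^T *m (X *m beta)) j 0.
have beta_hatE t : beta_hat t j 0 = m0 + \sum_i u i * z i t.
  by rewrite /beta_hat mulmx_col_entry.
have beta_tildeE t : beta_tilde t = m0 + \sum_i v i * z i t.
  rewrite /beta_tilde beta_hatE !mulmx_col_entry (knockoff_gram_null_coef Xt_gram) //.
  rewrite opprD addrACA subrr add0r -sumrB mulr_sumr -addrA -big_split /=.
  by congr (_ + _); apply: eq_bigr => i _; rewrite /v !mxE; ring.
have -> : (fun t => (beta_hat t j 0, beta_tilde t)) =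
          (fun t => (m0 + \sum_i u i * z i t, m0 + \sum_i v i * z i t)).
  by apply/funext => t; rewrite beta_hatE beta_tildeE.
have -> : (fun t => (beta_tilde t, beta_hat t j 0)) =
          (fun t => (m0 + \sum_i v i * z i t, m0 + \sum_i u i * z i t)).
  by apply/funext => t; rewrite beta_hatE beta_tildeE.
apply: (affine_pair_swap hz (lt0r_neq0 sigma_gt0)).
exact: knockoff_coef_norm Xt_gram (X_unit j) (Xt_unit j) G.
Qed.
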